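(* Let $d,n\ge1$ be integers and let $X=I_1\cup\dots\cup I_d$ be the disjoint union of $d$ copies $I_1,\dots,I_d$ of the unit interval $[0,1]$. Let $H$ be the (infinite) family of all sets $e=e^1\cup\dots\cup e^d\subseteq X$, with each $e^j$ empty or a closed interval in $I_j$, whose total length $|e|=\sum_j|e^j|$ satisfies $|e|>\frac1n$. Then: (1) every set $C\subseteq X$ meeting every member of $H$ satisfies $|C|\ge nd^2-d$; (2) for every finitely supported function $\alpha:H\to\mathbb{R}_{\ge0}$ such that $\sum_{e\in H,\,x\in e}\alpha(e)\le1$ for every $x\in X$, one has $\sum_{e\in H}\alpha(e)< nd$ (when $\alpha\not\equiv0$) and in any case $\sum_{e}\alpha(e)\le nd$.
   Context: $|e^j|$ denotes the length of the interval $e^j$ (zero if empty). *)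

From Stdlib Require Import Reals Lra List.
Import ListNotations.
Open Scope R_scope.

(* A point of X = I_0 ⊔ ... ⊔ I_{d-1}: a pair (j, x) with j < d, x ∈ [0,1]. *)
Definition point := (nat * R)%type.
Definition in_X (d : nat) (p : point) : Prop :=
  (fst p < d)%nat /\ 0 <= snd p <= 1.

(* A set e = e^0 ∪ ... ∪ e^{d-1}: a list of length d whose j-th entry is
   None (e^j empty) or Some (a,b) with 0 <= a <= b <= 1 (e^j = [a,b] ⊆ I_j).
   This representation is unique for each such set. *)
Definition edge := list (option (R * R)).

Definition comp_ok (o : option (R * R)) : Prop :=
  match o with
  | None => True
  | Some (a, b) => 0 <= a /\ a <= b /\ b <= 1
  end.

Definition valid_edge (d : nat) (e : edge) : Prop :=
  length e = d /\ Forall comp_ok e.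

Definition comp_len (o : option (R * R)) : R :=
  match o with None => 0 | Some (a, b) => b - a end.

Definition elen (e : edge) : R :=
  fold_right (fun o acc => comp_len o + acc) 0 e.

Definition inH (d n : nat) (e : edge) : Prop :=
  valid_edge d e /\ elen e > 1 / INR n.

Definition memb (p : point) (e : edge) : bool :=
  match nth_error e (fst p) with
  | Some (Some (a, b)) =>
      if Rle_dec a (snd p) then (if Rle_dec (snd p) b then true else false)
      else false
  | _ => false
  end.

Definition total (alpha : edge -> R) (s : list edge) : R :=
  fold_right (fun e acc => alpha e + acc) 0 s.

Definition load (alpha : edge -> R) (s : list edge) (p : point) : R :=
  fold_right (fun e acc => (if memb p e then alpha e else 0) + acc) 0 s.

From Stdlib Require Import Reals Lra Lia List Classical ClassicalEpsilon.
Import ListNotations.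
Open Scope R_scope.

(* Let a_j = |C ∩ I_j| + 1.  On the copy I_j any closed
   interval of length < 1/a_j can be slid into a gap of C, so if sum_j 1/a_j > 1/n
   some member of H misses C (transversal_harmonic_bound).  Since sum_j a_j =
   |C| + d, the tangent-line bound 1/a >= 2/M - a/M^2 at M = n d turns
   sum_j 1/a_j <= 1/n into |C| + d >= n d^2 (transversal_size).

   Sampling the grid of points (j, k/N), each
   member e contains at least N|e| - d grid points, while each grid point carries
   load at most 1; double counting gives N W - d A <= d (N + 1) for all N, where
   W = sum_e alpha(e)|e| and A = sum_e alpha(e), hence W <= d
   (weighted_length_bound).  As every member has length > 1/n, A <= n W <= n d,
   strictly if alpha is not identically zero (fractional_matching_bound). *)

Definition lsum {A : Type} (f : A -> R) (l : list A) : R :=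
  fold_right (fun x acc => f x + acc) 0 l.

Definition indicator (b : bool) : R := if b then 1 else 0.

Lemma lsum_app {A : Type} (f : A -> R) (l1 l2 : list A) :
  lsum f (l1 ++ l2) = lsum f l1 + lsum f l2.
Proof. induction l1 as [|x l1 IH]; simpl; [ring | rewrite IH; ring]. Qed.

Lemma lsum_ext {A : Type} (f g : A -> R) (l : list A) :
  (forall x, In x l -> f x = g x) -> lsum f l = lsum g l.
Proof.
  induction l as [|x l IH]; intros H; simpl; [reflexivity|].
  rewrite (H x (or_introl eq_refl)), IH by (intros; apply H; right; auto). reflexivity.
Qed.

Lemma lsum_le {A : Type} (f g : A -> R) (l : list A) :
  (forall x, In x l -> f x <= g x) -> lsum f l <= lsum g l.
Proof.
  induction l as [|x l IH]; intros H; simpl; [lra|].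
  assert (f x <= g x) by (apply H; left; auto).
  assert (lsum f l <= lsum g l) by (apply IH; intros; apply H; right; auto). lra.
Qed.

Lemma lsum_const {A : Type} (c : R) (l : list A) :
  lsum (fun _ => c) l = INR (length l) * c.
Proof. induction l as [|x l IH]; simpl lsum; simpl length; [simpl; ring | rewrite IH, S_INR; ring]. Qed.

Lemma lsum_nonneg {A : Type} (f : A -> R) (l : list A) :
  (forall x, In x l -> 0 <= f x) -> 0 <= lsum f l.
Proof.
  intros H. replace 0 with (lsum (fun _ : A => 0) l) by (rewrite lsum_const; ring).
  apply lsum_le; auto.
Qed.

Lemma lsum_linear {A : Type} (f g : A -> R) (a b : R) (l : list A) :
  lsum (fun x => a * f x + b * g x) l = a * lsum f l + b * lsum g l.
Proof. induction l as [|x l IH]; simpl; [ring | rewrite IH; ring]. Qed.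

Lemma lsum_plus {A : Type} (f g : A -> R) (l : list A) :
  lsum (fun x => f x + g x) l = lsum f l + lsum g l.
Proof. induction l as [|x l IH]; simpl; [ring | rewrite IH; ring]. Qed.

Lemma lsum_scal {A : Type} (f : A -> R) (c : R) (l : list A) :
  lsum (fun x => c * f x) l = c * lsum f l.
Proof. induction l as [|x l IH]; simpl; [ring | rewrite IH; ring]. Qed.

Lemma lsum_ge_term {A : Type} (f : A -> R) (l : list A) (x : A) :
  (forall y, In y l -> 0 <= f y) -> In x l -> f x <= lsum f l.
Proof.
  induction l as [|y l IH]; intros H Hx; simpl in *; [contradiction|].
  assert (0 <= f y) by auto.
  assert (0 <= lsum f l) by (apply lsum_nonneg; auto).
  destruct Hx as [<- | Hx]; [lra|].
  assert (f x <= lsum f l) by (apply IH; auto). lra.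
Qed.

Lemma lsum_swap {A B : Type} (f : A -> B -> R) (la : list A) (lb : list B) :
  lsum (fun a => lsum (f a) lb) la = lsum (fun b => lsum (fun a => f a b) la) lb.
Proof.
  induction la as [|a la IH]; simpl.
  - change (0 = lsum (fun _ : B => 0) lb). rewrite lsum_const; ring.
  - rewrite IH, <- lsum_plus. reflexivity.
Qed.

Lemma lsum_flat_map {A B : Type} (f : B -> R) (g : A -> list B) (l : list A) :
  lsum f (flat_map g l) = lsum (fun a => lsum f (g a)) l.
Proof. induction l as [|a l IH]; simpl; [reflexivity | rewrite lsum_app, IH; reflexivity]. Qed.

Lemma lsum_map {A B : Type} (f : B -> R) (g : A -> B) (l : list A) :
  lsum f (map g l) = lsum (fun a => f (g a)) l.
Proof. induction l as [|a l IH]; simpl; [reflexivity | rewrite IH; reflexivity]. Qed.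

Lemma lsum_by_index {A : Type} (f : A -> R) (l : list A) (x0 : A) :
  lsum f l = lsum (fun j => f (nth j l x0)) (seq 0 (length l)).
Proof.
  induction l as [|x l IH]; simpl; [reflexivity|].
  rewrite IH, <- seq_shift, lsum_map. reflexivity.
Qed.

Lemma lsum_indicator_seq (i m : nat) :
  (i < m)%nat -> lsum (fun j => indicator (Nat.eqb i j)) (seq 0 m) = 1.
Proof.
  assert (Hgen : forall a, lsum (fun j => indicator (Nat.eqb i j)) (seq a m) =
                           indicator (andb (a <=? i)%nat (i <? a + m)%nat)).
  { induction m as [|m IH]; intros a; simpl.
    - destruct (Nat.leb_spec a i), (Nat.ltb_spec i (a + 0)); simpl; lia || reflexivity.
    - rewrite IH. unfold indicator.
      destruct (Nat.eqb_spec i a), (Nat.leb_spec (S a) i), (Nat.ltb_spec i (S a + m)),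
               (Nat.leb_spec a i), (Nat.ltb_spec i (a + S m)); simpl; try lia; ring. }
  intros Hi. rewrite Hgen. destruct (Nat.ltb_spec i (0 + m)); [reflexivity | lia].
Qed.

(* Tangent line of the convex function a |-> 1/a at a = M. *)
Lemma inv_tangent (a M : R) : 0 < a -> 0 < M -> 2 / M - a / (M * M) <= / a.
Proof.
  intros Ha HM.
  assert (Hsq : 0 <= (M - a) ^ 2 / (a * (M * M))).
  { apply Rmult_le_pos; [apply pow2_ge_0 | left; apply Rinv_0_lt_compat; apply Rmult_lt_0_compat; [lra | nra]]. }
  replace (/ a) with (2 / M - a / (M * M) + (M - a) ^ 2 / (a * (M * M))) by (field; lra).
  lra.
Qed.

Lemma nonpos_of_bounded_multiples (x c : R) :
  (forall N, (1 <= N)%nat -> INR N * x <= c) -> x <= 0.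
Proof.
  intros H. destruct (Rle_dec x 0) as [|Hx]; [assumption | exfalso].
  destruct (INR_unbounded (c / x)) as [m Hm].
  specialize (H (S m) ltac:(lia)). rewrite S_INR in H.
  assert (c / x * x = c) by (field; lra).
  assert (c / x * x < INR m * x) by (apply Rmult_lt_compat_r; lra). lra.
Qed.

(* Among finitely many points, an interval [u,v] longer than (#points+1)·L
   contains a closed subinterval of length L free of the points: if some point
   lies in [u,u+L], discard it and recurse to the right of it. *)
Lemma free_subinterval (L : R) (l : list R) (u v : R) :
  0 <= L -> INR (length l + 1) * L < v - u ->
  exists a, u <= a /\ a + L <= v /\ forall x, In x l -> ~ (a <= x <= a + L).
Proof.
  intros HL. remember (length l) as N eqn:HN. revert l u HN.
  induction N as [|N IH]; intros l u HN Hlt.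
  - destruct l; [|discriminate]. exists u. simpl in Hlt. repeat split; try lra.
    intros x [].
  - destruct (classic (exists y, In y l /\ u <= y <= u + L)) as [[y [Hy Hyu]] | Hno].
    + destruct (in_split _ _ Hy) as [l1 [l2 ->]].
      assert (Hlen : length (l1 ++ l2) = N) by (rewrite length_app in *; simpl in HN; lia).
      rewrite plus_INR, S_INR in Hlt. simpl INR in Hlt.
      destruct (IH (l1 ++ l2) (y + (v - u - (INR N + 2) * L) / 2) (eq_sym Hlen))
        as [a [Ha1 [Ha2 Ha3]]].
      { rewrite plus_INR. simpl INR. lra. }
      exists a. repeat split; try lra.
      intros x Hx. apply in_app_iff in Hx. destruct Hx as [Hx | [<- | Hx]];
        [apply Ha3, in_app_iff; auto | lra | apply Ha3, in_app_iff; auto].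
    + exists u. assert (1 <= INR (S N + 1)) by (rewrite plus_INR, S_INR; pose proof (pos_INR N); simpl; lra).
      repeat split; try nra. intros x Hx Hxu. apply Hno. eauto.
Qed.

Definition in_interval (a b x : R) : bool :=
  if Rle_dec a x then (if Rle_dec x b then true else false) else false.

(* Counting integers: {0,...,M} contains at least y - x - 1 integers of [x,y],
   for 0 <= x and y <= M + 1 (stated with an auxiliary z <= y for the induction). *)
Lemma count_integers_in_interval (M : nat) (x y z : R) :
  0 <= x -> z <= y -> z <= INR M + 1 ->
  z - x - 1 <= lsum (fun k => indicator (in_interval x y (INR k)))
                    (seq 0 (S M)).
Proof.
  revert z. induction M as [|M IH]; intros z Hx Hzy HzM.
  - simpl in *. unfold indicator, in_interval. repeat destruct Rle_dec; simpl; lra.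
  - set (f := fun k => indicator (in_interval x y (INR k))) in *.
    rewrite seq_S, lsum_app. rewrite S_INR in HzM.
    replace (lsum f [(0 + S M)%nat]) with (f (S M)) by (simpl; ring).
    assert (Hf : 0 <= f (S M)) by (unfold f, indicator, in_interval; repeat destruct Rle_dec; simpl; lra).
    destruct (Rle_dec z (INR M + 1)) as [Hz | Hz].
    + pose proof (IH z Hx Hzy Hz). lra.
    + pose proof (IH (INR M + 1) Hx ltac:(lra) ltac:(lra)).
      assert (0 <= lsum f (seq 0 (S M))) by (apply lsum_nonneg; intros; unfold f, indicator, in_interval;
        repeat destruct Rle_dec; simpl; lra).
      unfold f, indicator, in_interval in *. rewrite S_INR in *.
      repeat destruct Rle_dec; simpl in *; lra.
Qed.

Definition in_comp (o : option (R * R)) (x : R) : bool :=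
  match o with Some (a, b) => in_interval a b x | None => false end.

Lemma memb_nth (p : point) (e : edge) : memb p e = in_comp (nth (fst p) e None) (snd p).
Proof.
  destruct p as [j x]. unfold memb; simpl fst; simpl snd. revert j.
  induction e as [|o e IH]; intros [|j]; simpl; try reflexivity.
  apply IH.
Qed.

Definition fiber (C : list point) (j : nat) : list R :=
  map snd (filter (fun p : point => Nat.eqb (fst p) j) C).

Lemma in_fiber (C : list point) (j : nat) (x : R) : In (j, x) C -> In x (fiber C j).
Proof.
  intros H. apply in_map_iff. exists (j, x). split; [reflexivity|].
  apply filter_In. split; [assumption | apply Nat.eqb_refl].
Qed.

Lemma fiber_sizes (d : nat) (C : list point) :
  Forall (in_X d) C -> lsum (fun j => INR (length (fiber C j))) (seq 0 d) = INR (length C).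
Proof.
  induction C as [|p C IH]; intros HC.
  - unfold fiber; simpl. rewrite lsum_const. ring.
  - inversion HC as [|? ? [Hp _] HC']; subst.
    rewrite (lsum_ext _ (fun j => indicator (Nat.eqb (fst p) j) + INR (length (fiber C j)))).
    + rewrite lsum_plus, lsum_indicator_seq, IH by assumption. simpl length. rewrite S_INR. ring.
    + intros j _. unfold fiber, indicator. simpl.
      destruct (Nat.eqb (fst p) j); simpl length; try rewrite S_INR; ring.
Qed.

Lemma avoiding_edge (d : nat) (C : list point) (L : nat -> R) :
  (forall j, 0 <= L j /\ INR (length (fiber C j) + 1) * L j < 1) ->
  exists e, valid_edge d e /\ elen e = lsum L (seq 0 d) /\
            forall p, In p C -> memb p e = false.
Proof.
  intros HL.
  destruct (choice (fun j a => 0 <= a /\ a + L j <= 1 /\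
                               forall x, In x (fiber C j) -> ~ (a <= x <= a + L j)))
    as [A HA].
  { intros j. destruct (HL j) as [HL0 HL1].
    destruct (free_subinterval (L j) (fiber C j) 0 1 HL0 ltac:(lra)) as [a Ha].
    exists a. exact Ha. }
  set (comp := fun j => Some (A j, A j + L j)).
  exists (map comp (seq 0 d)). repeat split.
  - rewrite length_map, length_seq. reflexivity.
  - apply Forall_forall. intros o Ho. apply in_map_iff in Ho as [j [<- _]].
    destruct (HA j) as [HA0 [HA1 _]]. destruct (HL j). simpl. lra.
  - change (lsum comp_len (map comp (seq 0 d)) = lsum L (seq 0 d)).
    rewrite lsum_map. apply lsum_ext. intros j _. simpl. ring.
  - intros [j x] Hp. rewrite memb_nth. simpl fst; simpl snd.
    destruct (Nat.lt_ge_cases j d) as [Hj | Hj].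
    + rewrite (nth_indep _ None (comp 0%nat)) by (rewrite length_map, length_seq; lia).
      rewrite map_nth, seq_nth by lia. simpl. unfold in_interval.
      destruct (HA j) as [_ [_ Hfree]]. specialize (Hfree x (in_fiber C j x Hp)).
      repeat destruct Rle_dec; tauto.
    + rewrite nth_overflow by (rewrite length_map, length_seq; lia). reflexivity.
Qed.

Definition transversal (d n : nat) (C : list point) : Prop :=
  forall e, inH d n e -> exists p, In p C /\ memb p e = true.

(* With a_j = |C ∩ I_j| + 1, a transversal satisfies  sum_j 1/a_j <= 1/n:
   otherwise components of lengths t/a_j (t < 1 close to 1) avoid C and still
   have total length > 1/n. *)
Lemma transversal_harmonic_bound (d n : nat) (C : list point) :
  (1 <= n)%nat -> transversal d n C ->
  lsum (fun j => / (INR (length (fiber C j)) + 1)) (seq 0 d) <= / INR n.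
Proof.
  intros Hn HC. set (harmonic := lsum _ (seq 0 d)).
  destruct (Rle_dec harmonic (/ INR n)) as [|Hlarge]; [assumption | exfalso].
  assert (HnR : 0 < INR n) by (apply lt_0_INR; lia).
  assert (Hinvn : 0 < / INR n) by (apply Rinv_0_lt_compat; lra).
  set (t := (/ INR n + harmonic) / (2 * harmonic)).
  assert (Ht0 : 0 < t) by (unfold t; apply Rdiv_lt_0_compat; lra).
  assert (Ht1 : t < 1) by (unfold t; apply (Rmult_lt_reg_r (2 * harmonic)); [lra|];
                           unfold Rdiv; rewrite Rmult_assoc, Rinv_l; lra).
  assert (HtS : / INR n < t * harmonic).
  { replace (t * harmonic) with ((/ INR n + harmonic) / 2) by (unfold t; field; lra). lra. }
  destruct (avoiding_edge d C (fun j => t / (INR (length (fiber C j)) + 1))) as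
    [e [He [Hlen Hmiss]]].
  { intros j. pose proof (pos_INR (length (fiber C j))).
    rewrite plus_INR. simpl INR. split.
    - left; apply Rdiv_lt_0_compat; lra.
    - replace (_ * _) with t by (field; lra). assumption. }
  destruct (HC e) as [p [Hp Hpe]].
  - split; [assumption|]. rewrite Hlen. unfold Rdiv. rewrite lsum_scal. fold harmonic. lra.
  - rewrite Hmiss in Hpe by assumption. discriminate.
Qed.

(* Part (1): by the tangent-line bound 1/a >= 2/M - a/M^2 with M = n d and
   sum_j a_j = |C| + d, the harmonic bound forces |C| + d >= n d^2. *)
Lemma transversal_size (d n : nat) (C : list point) :
  (1 <= d)%nat -> (1 <= n)%nat -> Forall (in_X d) C -> transversal d n C ->
  (length C + d >= n * d * d)%nat.
Proof.
  intros Hd Hn HX HC.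
  assert (HnR : 0 < INR n) by (apply lt_0_INR; lia).
  assert (HdR : 0 < INR d) by (apply lt_0_INR; lia).
  set (M := INR n * INR d). assert (HM : 0 < M) by (unfold M; nra).
  set (a := fun j => INR (length (fiber C j)) + 1).
  assert (Hsum_a : lsum a (seq 0 d) = INR (length C) + INR d).
  { unfold a. rewrite lsum_plus, fiber_sizes, lsum_const, length_seq by assumption. ring. }
  assert (Htangent : lsum (fun j => 2 / M * 1 + (- / (M * M)) * a j) (seq 0 d) <= / INR n).
  { eapply Rle_trans; [| apply (transversal_harmonic_bound d n C Hn HC)].
    apply lsum_le. intros j _. pose proof (pos_INR (length (fiber C j))).
    replace (2 / M * 1 + - / (M * M) * a j) with (2 / M - a j / (M * M)) by (unfold Rdiv; ring).
    apply inv_tangent; unfold a; lra. }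
  rewrite lsum_linear, lsum_const, length_seq, Hsum_a in Htangent.
  unfold ge. apply INR_le. rewrite !mult_INR, plus_INR.
  assert (Hscaled : 2 * INR n * INR d * INR d - (INR (length C) + INR d) <= INR n * INR d * INR d).
  { apply (Rmult_le_compat_l (M * M)) in Htangent; [| nra].
    unfold M in Htangent. field_simplify in Htangent; [| lra | lra]. nra. }
  lra.
Qed.

Definition grid (d N : nat) : list point :=
  flat_map (fun j => map (fun k => (j, INR k / INR N)) (seq 0 (S N))) (seq 0 d).

Lemma grid_in_X (d N : nat) (p : point) :
  (1 <= N)%nat -> In p (grid d N) -> in_X d p.
Proof.
  intros HN Hp. apply in_flat_map in Hp as [j [Hj Hp]]. apply in_map_iff in Hp as [k [<- Hk]].
  apply in_seq in Hj, Hk. assert (HNR : 0 < INR N) by (apply lt_0_INR; lia).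
  split; simpl; [lia|]. split.
  - apply Rmult_le_pos; [apply pos_INR | left; apply Rinv_0_lt_compat; lra].
  - apply Rmult_le_reg_r with (INR N); [lra|].
    unfold Rdiv. rewrite Rmult_assoc, Rinv_l, Rmult_1_r, Rmult_1_l by lra. apply le_INR. lia.
Qed.

Lemma grid_size (d N : nat) : lsum (fun _ => 1) (grid d N) = INR d * (INR N + 1).
Proof.
  unfold grid. rewrite lsum_flat_map.
  rewrite (lsum_ext _ (fun _ => INR N + 1)).
  - rewrite lsum_const, length_seq. reflexivity.
  - intros j _. rewrite lsum_map, lsum_const, length_seq, S_INR. ring.
Qed.

Lemma component_samples (N : nat) (o : option (R * R)) :
  (1 <= N)%nat -> comp_ok o ->
  INR N * comp_len o - 1 <= lsum (fun k => indicator (in_comp o (INR k / INR N))) (seq 0 (S N)).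
Proof.
  intros HN Ho. assert (HNR : 0 < INR N) by (apply lt_0_INR; lia).
  destruct o as [[a b]|]; cbn [comp_ok comp_len in_comp] in Ho |- *.
  - rewrite (lsum_ext _ (fun k => indicator (in_interval (INR N * a) (INR N * b) (INR k)))).
    + apply Rle_trans with (INR N * b - INR N * a - 1); [lra|].
      apply count_integers_in_interval; nra.
    + intros k _. unfold in_interval.
      assert (Hk : INR k = INR N * (INR k / INR N)) by (field; lra).
      set (x := INR k / INR N) in *.
      destruct (Rle_dec a x), (Rle_dec x b), (Rle_dec (INR N * a) (INR k)),
               (Rle_dec (INR k) (INR N * b)); try reflexivity; exfalso; nra.
  - apply Rle_trans with 0; [lra|]. apply lsum_nonneg. intros; unfold indicator; lra.
Qed.

Lemma edge_samples (d N : nat) (e : edge) :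
  (1 <= N)%nat -> valid_edge d e ->
  INR N * elen e - INR d <= lsum (fun p => indicator (memb p e)) (grid d N).
Proof.
  intros HN [Hlen Hok].
  change (elen e) with (lsum comp_len e). rewrite (lsum_by_index _ _ None), Hlen.
  unfold grid. rewrite lsum_flat_map.
  replace (INR N * _ - INR d)
    with (lsum (fun j => INR N * comp_len (nth j e None) + (-1) * 1) (seq 0 d))
    by (rewrite lsum_linear, lsum_const, length_seq; ring).
  apply lsum_le. intros j Hj. apply in_seq in Hj. rewrite lsum_map.
  rewrite (lsum_ext _ (fun k => indicator (in_comp (nth j e None) (INR k / INR N))))
    by (intros; rewrite memb_nth; reflexivity).
  replace (_ + -1 * 1) with (INR N * comp_len (nth j e None) - 1) by ring.
  apply component_samples; [assumption|].
  rewrite Forall_forall in Hok. apply Hok, nth_In. lia.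
Qed.

Lemma load_double_count (alpha : edge -> R) (s : list edge) (P : list point) :
  lsum (load alpha s) P = lsum (fun e => alpha e * lsum (fun p => indicator (memb p e)) P) s.
Proof.
  change (load alpha s) with (fun p => lsum (fun e => if memb p e then alpha e else 0) s).
  rewrite lsum_swap. apply lsum_ext. intros e _. rewrite <- lsum_scal.
  apply lsum_ext. intros p _. unfold indicator. destruct (memb p e); ring.
Qed.

(* Counting incidences with the grid gives
   N W - d A <= d (N + 1) for every N, where A = sum_e alpha(e). *)
Lemma weighted_length_bound (d : nat) (alpha : edge -> R) (s : list edge) :
  (forall e, In e s -> valid_edge d e) ->
  (forall e, In e s -> 0 <= alpha e) ->
  (forall p, in_X d p -> load alpha s p <= 1) ->
  lsum (fun e => alpha e * elen e) s <= INR d.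
Proof.
  intros Hvalid Hpos Hload.
  set (W := lsum (fun e => alpha e * elen e) s). set (A := lsum alpha s).
  cut (W - INR d <= 0); [lra|].
  apply (nonpos_of_bounded_multiples _ (INR d + INR d * A)). intros N HN.
  assert (Hincidences : INR N * W - INR d * A <= lsum (load alpha s) (grid d N)).
  { rewrite load_double_count.
    replace (INR N * W - INR d * A)
      with (lsum (fun e => alpha e * (INR N * elen e - INR d)) s).
    - apply lsum_le. intros e He. apply Rmult_le_compat_l; [auto|].
      apply edge_samples; auto.
    - transitivity (INR N * W + (- INR d) * A); [| ring].
      unfold W, A. rewrite <- lsum_linear. apply lsum_ext. intros; ring. }
  assert (Hcapacity : lsum (load alpha s) (grid d N) <= INR d * (INR N + 1)).
  { rewrite <- grid_size. apply lsum_le. intros p Hp. apply Hload, (grid_in_X d N); auto. }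
  lra.
Qed.

Lemma member_long (d n : nat) (e : edge) : (1 <= n)%nat -> inH d n e -> 1 < INR n * elen e.
Proof.
  intros Hn [_ He]. assert (HnR : 0 < INR n) by (apply lt_0_INR; lia).
  apply (Rmult_lt_compat_l (INR n)) in He; [| assumption].
  replace (INR n * (1 / INR n)) with 1 in He by (field; lra). assumption.
Qed.

(* Part (2): since every member is longer than 1/n, the total weight A satisfies
   A <= n W <= n d, strictly as soon as some weight is positive. *)
Lemma fractional_matching_bound (d n : nat) (alpha : edge -> R) (s : list edge) :
  (1 <= n)%nat ->
  (forall e, In e s -> inH d n e) ->
  (forall e, inH d n e -> 0 <= alpha e) ->
  (forall e, inH d n e -> ~ In e s -> alpha e = 0) ->
  (forall p, in_X d p -> load alpha s p <= 1) ->
  total alpha s <= INR (n * d) /\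
  ((exists e, inH d n e /\ alpha e <> 0) -> total alpha s < INR (n * d)).
Proof.
  intros Hn Hs Hpos Hzero Hload.
  change (total alpha s) with (lsum alpha s).
  set (excess := fun e => alpha e * (INR n * elen e - 1)).
  assert (Hexcess_pos : forall e, In e s -> 0 <= excess e).
  { intros e He. pose proof (member_long d n e Hn (Hs e He)).
    apply Rmult_le_pos; [apply Hpos, Hs|]; auto; lra. }
  assert (Hexcess_sum : lsum excess s = INR n * lsum (fun e => alpha e * elen e) s + (-1) * lsum alpha s).
  { rewrite <- lsum_linear. apply lsum_ext. intros; unfold excess; ring. }
  assert (HW : lsum (fun e => alpha e * elen e) s <= INR d).
  { apply weighted_length_bound; [intros e He; apply Hs; auto | intros; apply Hpos, Hs; auto | auto]. }
  assert (HnR : 0 < INR n) by (apply lt_0_INR; lia).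
  assert (HnW : INR n * lsum (fun e => alpha e * elen e) s <= INR (n * d))
    by (rewrite mult_INR; apply Rmult_le_compat_l; lra).
  split.
  - pose proof (lsum_nonneg excess s Hexcess_pos). lra.
  - intros [e [He Hne]].
    assert (Hin : In e s) by (apply NNPP; intros Hnot; exact (Hne (Hzero e He Hnot))).
    assert (0 < excess e).
    { pose proof (member_long d n e Hn He). pose proof (Hpos e He).
      apply Rmult_lt_0_compat; lra. }
    pose proof (lsum_ge_term excess s e Hexcess_pos Hin). lra.
Qed.

Theorem mainTheorem15 (d n : nat) (hd : (1 <= d)%nat) (hn : (1 <= n)%nat) :
  (* (1) every finite transversal C ⊆ X of H has |C| >= n d^2 - d *)
  (forall C : list point,
      NoDup C -> Forall (in_X d) C ->
      (forall e, inH d n e -> exists p, In p C /\ memb p e = true) ->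
      (length C + d >= n * d * d)%nat) /\
  (* (2) fractional matchings: finitely supported alpha : H -> R_{>=0} *)
  (forall (alpha : edge -> R) (s : list edge),
      NoDup s ->
      (forall e, In e s -> inH d n e) ->
      (forall e, inH d n e -> 0 <= alpha e) ->
      (forall e, inH d n e -> ~ In e s -> alpha e = 0) ->
      (forall p, in_X d p -> load alpha s p <= 1) ->
      total alpha s <= INR (n * d) /\
      ((exists e, inH d n e /\ alpha e <> 0) -> total alpha s < INR (n * d))).
Proof.
  split.
  - intros C _ HX HC. exact (transversal_size d n C hd hn HX HC).
  - intros alpha s _. exact (fractional_matching_bound d n alpha s hn).
Qed.
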